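(* Let $q,m$ be positive integers with $q\ge 2$. Let $\mathbf{A}^{q,m}=[a_{j,k}]$ be the $q^m\times q(m+1)$ array with rows indexed by $j\in[0,q^m)$ and columns by $k\in[0,q(m+1))$, defined as follows. Write $j=(j_{m-1},\dots,j_0)_q$ and $k=uq+v$ with $0\le u\le m$, $0\le v<q$. If $0\le u<m$: $$a_{j,k}=\begin{cases} *, & j_u=v,\\ (j_u-v-1,\ j_{m-1},\dots,j_{u+1},\ v,\ j_{u-1},\dots,j_0)_q, & j_u\ne v.\end{cases}$$ If $u=m$: $$a_{j,k}=\begin{cases} *, & j_0+\cdots+j_{m-1}=v,\\ (v-\textstyle\sum_{l=0}^{m-1}j_l-1,\ j_{m-1},\dots,j_0)_q, & j_0+\cdots+j_{m-1}\ne v,\end{cases}$$ where all additions and subtractions of digits (including in the conditions) are performed modulo $q$ (with results in $[0,q)$). Then $\mathbf{A}^{q,m}$ is an $(m+1)$-regular $(q(m+1),\,q^m,\,q^{m-1},\,q^{m+1}-q^m)$ PDA, and its rate $S/F$ equals $q-1$.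
   Context: Notation: $[i,j)=\{i,\dots,j-1\}$. For an integer $s$ with $s=\sum_{l=0}^{n-1}s_lq^l$, $s_l\in[0,q)$, we write $s=(s_{n-1},\dots,s_0)_q$ (the $q$-ary representation; the leftmost digit is most significant). For positive integers $K,F,Z,S$ and an integer $g$, an $F\times K$ array $\mathbf{P}=[p_{j,k}]$ whose entries are either a special symbol $*$ or one of the integers $0,1,\dots,S-1$ is a $g$-regular $(K,F,Z,S)$ PDA if: (C1) the symbol $*$ appears exactly $Z$ times in each column; (C2') each integer in $[0,S)$ appears exactly $g$ times in $\mathbf{P}$; (C3) for any two distinct entries with $p_{j_1,k_1}=p_{j_2,k_2}=s$ an integer, we have $j_1\neq j_2$, $k_1\neq k_2$, and $p_{j_1,k_2}=p_{j_2,k_1}=*$. The rate of such a PDA (i.e. of its associated caching scheme) is $R=S/F$. *)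

From mathcomp Require Import all_boot all_order all_algebra.
Set Implicit Arguments. Unset Strict Implicit. Unset Printing Implicit Defensive.

(* An F x K array whose entries are either the star symbol (None) or an
   integer (Some s). *)
Definition array (F K : nat) := 'I_F -> 'I_K -> option nat.

Definition regular_PDA (g K F Z S : nat) (P : array F K) : Prop :=
  [/\ (forall (j : 'I_F) (k : 'I_K) (s : nat), P j k = Some s -> s < S),
      (forall k : 'I_K, #|[set j : 'I_F | P j k == None]| = Z),
      (forall s, s < S ->
         #|[set jk : 'I_F * 'I_K | P jk.1 jk.2 == Some s]| = g) &
      (forall (j1 j2 : 'I_F) (k1 k2 : 'I_K) (s : nat),
         (j1, k1) != (j2, k2) -> P j1 k1 = Some s -> P j2 k2 = Some s ->
         [/\ j1 != j2, k1 != k2, P j1 k2 = None & P j2 k1 = None])].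

Arguments regular_PDA : clear implicits.

Definition rate (S F : nat) : rat := (S%:R / F%:R)%R.

Definition digit (q j l : nat) : nat := (j %/ q ^ l) %% q.

Definition Aqm (q m : nat) : array (q ^ m) (q * (m + 1)) :=
  fun j k =>
    let u := k %/ q in
    let v := k %% q in
    if u < m then
      if digit q j u == v then None
      else Some (((digit q j u + 2 * q - v - 1) %% q) * q ^ m
                 + \sum_(l < m) (if l == u :> nat then v else digit q j l) * q ^ l)
    else
      let sm := (\sum_(l < m) digit q j l) %% q in
      if sm == v then None
      else Some (((v + 2 * q - sm - 1) %% q) * q ^ m
                 + \sum_(l < m) digit q j l * q ^ l).

Arguments Aqm : clear implicits.
Arguments digit : clear implicits.
Arguments rate : clear implicits.

From mathcomp Require Import all_boot all_order all_algebra zify.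
Set Implicit Arguments. Unset Strict Implicit. Unset Printing Implicit Defensive.
Import GRing.Theory Num.Theory.

(* Write a symbol s < (q - 1) q^m as s = t q^m + y with t < q - 1 and y < q^m.
   In the column block u < m the symbol s occurs exactly once, in the row
   obtained from y by replacing its digit y_u by y_u + t + 1 (mod q), in the column
   labelled y_u; in the last block it occurs in row y, in the column labelled
   t + 1 + sum_l y_l (mod q).  These m + 1 positions give (C2').  Moving from the
   occurrence in block u1 to the column of the occurrence in block u2 changes
   nothing in the statistic (digit u2, or digit sum) that decides the star in
   block u2, so the crossing cells are stars (C3).  Finally, adding 1 to a
   suitable digit permutes the rows and shifts each block statistic by one,
   so every column contains q^(m-1) stars (C1). *)

Lemma card_fiber_cycle (T : finType) (q : nat) (g : T -> nat) (h : T -> T) :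
  (forall x, g x < q) -> injective h -> (forall x, g (h x) = (g x).+1 %% q) ->
  forall v, v < q -> q * #|[set x | g x == v]| = #|T|.
Proof.
move=> g_lt h_inj g_h.
have fiberS v : v.+1 < q -> #|[set x | g x == v.+1]| = #|[set x | g x == v]|.
  move=> v_lt; rewrite -[RHS](card_imset _ h_inj); apply: eq_card => y.
  apply/idP/imsetP => [| [x]]; last first.
    by rewrite !inE => /eqP gx ->; rewrite g_h gx modn_small.
  rewrite inE => /eqP gy.
  have [h' _ h'K] := injF_bij h_inj.
  have e : (g (h' y)).+1 %% q = v.+1 by rewrite -g_h h'K.
  have lt : (g (h' y)).+1 < q.
    by move: (g_lt (h' y)) e; rewrite leq_eqVlt => /orP[/eqP->|//]; rewrite modnn.
  by exists (h' y); [rewrite inE; move: e; rewrite modn_small // => -[->] | rewrite h'K].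
have fiber_const v : v < q -> #|[set x | g x == v]| = #|[set x | g x == 0]|.
  by elim: v => // v IH v_lt; rewrite fiberS // IH // ltnW.
move=> v v_lt; pose gO x := Ordinal (g_lt x).
rewrite -[RHS]sum1_card (partition_big gO xpredT) //=.
rewrite (eq_bigr (fun _ => #|[set x | g x == v]|)) ?sum_nat_const ?card_ord //.
move=> w _; rewrite fiber_const // -(fiber_const w) // -sum1_card.
by apply: eq_bigl => x; rewrite inE /gO -val_eqE.
Qed.

Section Digits.

Variable q : nat.
Hypothesis q_gt0 : 0 < q.

Definition from_digits (m : nat) (d : nat -> nat) : nat := \sum_(l < m) d l * q ^ l.

Definition set_digit (m j p x : nat) : nat :=
  from_digits m (fun l => if l == p then x else digit q j l).

Lemma digit_lt j l : digit q j l < q.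
Proof. by rewrite /digit ltn_pmod. Qed.

Lemma digit0 j : digit q j 0 = j %% q.
Proof. by rewrite /digit expn0 divn1. Qed.

Lemma digitS j l : digit q j l.+1 = digit q (j %/ q) l.
Proof. by rewrite /digit expnS divnMA. Qed.

Lemma digitMDl m t y l : l < m -> digit q (t * q ^ m + y) l = digit q y l.
Proof.
move=> lm; have -> : q ^ m = q ^ (m - l).-1 * q * q ^ l.
  by rewrite -expnSr prednK ?subn_gt0 // -expnD subnK // ltnW.
by rewrite /digit mulnA divnMDl ?expn_gt0 ?q_gt0 // mulnA modnMDl.
Qed.

Lemma digit_modn m j l : l < m -> digit q (j %% q ^ m) l = digit q j l.
Proof. by move=> lm; rewrite {2}(divn_eq j (q ^ m)) digitMDl. Qed.

Lemma from_digitsS m d : from_digits m.+1 d = d 0 + q * from_digits m (fun l => d l.+1).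
Proof.
rewrite /from_digits big_ord_recl /= expn0 muln1 big_distrr /=; congr (_ + _).
by apply: eq_bigr => i _; rewrite /bump /= add1n expnS mulnCA.
Qed.

Lemma eq_from_digits m d d' :
  (forall l, l < m -> d l = d' l) -> from_digits m d = from_digits m d'.
Proof. by move=> dd'; apply: eq_bigr => l _; rewrite dd'. Qed.

Lemma from_digits_lt m d : (forall l, l < m -> d l < q) -> from_digits m d < q ^ m.
Proof.
elim: m d => [|m IH] d d_lt; first by rewrite /from_digits big_ord0.
rewrite from_digitsS expnS.
have := IH (fun l => d l.+1) (fun l => d_lt l.+1); have := d_lt 0.
nia.
Qed.

Lemma digit_from_digits m d l :
  (forall l, l < m -> d l < q) -> l < m -> digit q (from_digits m d) l = d l.
Proof.
elim: m d l => [|m IH] d [|l] d_lt // lm; rewrite from_digitsS.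
  by rewrite digit0 addnC mulnC modnMDl modn_small ?d_lt.
rewrite digitS addnC mulnC divnMDl // divn_small ?d_lt // addn0.
by rewrite IH // => l' l'm; apply: d_lt.
Qed.

Lemma from_digits_digit m j : from_digits m (digit q j) = j %% q ^ m.
Proof.
elim: m j => [|m IH] j; first by rewrite /from_digits big_ord0 modn1.
rewrite from_digitsS (eq_from_digits (d' := digit q (j %/ q))) => [|l _]; last first.
  exact: digitS.
rewrite IH digit0 modn_divl expnSr.
have -> : j %% q = (j %% (q ^ m * q)) %% q by rewrite modn_dvdm // dvdn_mull.
by rewrite addnC mulnC -divn_eq.
Qed.

Lemma digits_inj m j1 j2 : j1 < q ^ m -> j2 < q ^ m ->
  (forall l, l < m -> digit q j1 l = digit q j2 l) -> j1 = j2.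
Proof.
move=> j1_lt j2_lt e; rewrite -(modn_small j1_lt) -(modn_small j2_lt).
by rewrite -!from_digits_digit; apply: eq_from_digits.
Qed.

Lemma set_digit_lt m j p x : x < q -> set_digit m j p x < q ^ m.
Proof. by move=> x_lt; apply: from_digits_lt => l _; case: eqP; rewrite ?digit_lt. Qed.

Lemma digit_set_digit m j p x l : x < q -> l < m ->
  digit q (set_digit m j p x) l = if l == p then x else digit q j l.
Proof.
by move=> x_lt; apply: digit_from_digits => l' _; case: eqP; rewrite ?digit_lt.
Qed.

Lemma set_digit_id m j p : set_digit m j p (digit q j p) = j %% q ^ m.
Proof.
by rewrite -from_digits_digit; apply: eq_from_digits => l _; case: eqP => [->|].
Qed.

Lemma set_digitMDl m t y p x : set_digit m (t * q ^ m + y) p x = set_digit m y p x.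
Proof. by apply: eq_from_digits => l lm; rewrite digitMDl. Qed.

Lemma set_digitK m j p x z :
  x < q -> set_digit m (set_digit m j p x) p z = set_digit m j p z.
Proof.
by move=> x_lt; apply: eq_from_digits => l lm; rewrite digit_set_digit //; case: eqP.
Qed.

Lemma sum_digits_set_digit m j p x : p < m -> x < q ->
  \sum_(l < m) digit q (set_digit m j p x) l + digit q j p = \sum_(l < m) digit q j l + x.
Proof.
move=> pm x_lt; rewrite (bigD1 (Ordinal pm)) // [in RHS](bigD1 (Ordinal pm)) //=.
rewrite digit_set_digit // eqxx.
rewrite (eq_bigr (fun l : 'I_m => digit q j l)) => [|l lp].
  by rewrite addnAC [RHS]addnAC (addnC x).
by rewrite digit_set_digit // ifN.
Qed.

End Digits.

Section ModularDigits.

Variable q : nat.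
Hypothesis q_gt0 : 0 < q.

(* The paper's digit [a - b - 1] modulo [q]; adding [2 * q] keeps the truncated
   subtraction exact whenever [a, b < q]. *)
Definition modsubS (a b : nat) : nat := (a + 2 * q - b - 1) %% q.

Lemma modsubSK a b : a < q -> b < q -> (modsubS a b + b.+1) %% q = a.
Proof.
move=> a_lt b_lt; rewrite /modsubS modnDml.
have -> : a + 2 * q - b - 1 + b.+1 = 2 * q + a by lia.
by rewrite modnMDl modn_small.
Qed.

Lemma modsubS_eq a b t : b < q -> t < q -> (t + b.+1) %% q = a -> modsubS a b = t.
Proof.
move=> b_lt t_lt ta; have a_lt : a < q by rewrite -ta ltn_pmod.
apply/eqP; rewrite -(modn_small t_lt) /modsubS -(eqn_modDr b.+1) ta -modnDml.
by rewrite modsubSK // modn_small.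
Qed.

Lemma modsubS_lt_pred a b : a < q -> b < q -> a != b -> modsubS a b < q.-1.
Proof.
move=> a_lt b_lt; rewrite ltnNge; apply: contra => le_pred.
have e : modsubS a b = q.-1 by apply/eqP; rewrite eqn_leq le_pred -ltnS prednK ?ltn_pmod.
by rewrite -(modsubSK a_lt b_lt) e -addSnnS prednK // modnDl modn_small.
Qed.

Lemma modnDS_neq t b : t < q.-1 -> b < q -> (t + b.+1) %% q != b.
Proof.
move=> t_lt b_lt; rewrite -addSnnS -{2}(modn_small b_lt) -{2}(add0n b) eqn_modDr.
by rewrite mod0n modn_small ?prednK //; lia.
Qed.

Lemma modnDSmr t x : (t + (x %% q).+1) %% q = (t + x.+1) %% q.
Proof. by rewrite -!addSnnS modnDmr. Qed.

End ModularDigits.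

Section Array.

Variables q m : nat.
Hypothesis q_gt0 : 0 < q.

Definition entry (j k : nat) : option nat :=
  if k %/ q < m then
    if digit q j (k %/ q) == k %% q then None
    else Some (modsubS q (digit q j (k %/ q)) (k %% q) * q ^ m
               + set_digit q m j (k %/ q) (k %% q))
  else
    if (\sum_(l < m) digit q j l) %% q == k %% q then None
    else Some (modsubS q (k %% q) ((\sum_(l < m) digit q j l) %% q) * q ^ m
               + from_digits q m (digit q j)).

Lemma AqmE (j : 'I_(q ^ m)) (k : 'I_(q * (m + 1))) : Aqm q m j k = entry j k.
Proof. by []. Qed.

Definition star_digit (u j : nat) : nat :=
  if u < m then digit q j u else (\sum_(l < m) digit q j l) %% q.

Lemma entry_eq_None j k : (entry j k == None) = (star_digit (k %/ q) j == k %% q).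
Proof. by rewrite /entry /star_digit; case: ifP => _; case: ifP. Qed.

Lemma star_digit_lt u j : star_digit u j < q.
Proof. by rewrite /star_digit; case: ifP; rewrite ?digit_lt ?ltn_pmod. Qed.

Lemma card_star_digit u v : 0 < m -> v < q ->
  q * #|[set j : 'I_(q ^ m) | star_digit u j == v]| = q ^ m.
Proof.
move=> m_gt0 v_lt; pose p := if u < m then u else 0.
have pm : p < m by rewrite /p; case: ifP.
have incr_lt (j : nat) : (digit q j p).+1 %% q < q by rewrite ltn_pmod.
pose incr (j : 'I_(q ^ m)) := Ordinal (set_digit_lt q_gt0 m j p (incr_lt j)).
rewrite -[RHS]card_ord.
apply: (card_fiber_cycle (h := incr)) v_lt => [j | j1 j2 /(congr1 val) /= e | j].
- exact: star_digit_lt.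
- apply: ord_inj; apply: (digits_inj (ltn_ord j1) (ltn_ord j2)) => l lm.
  move: (congr1 (digit q ^~ l) e); rewrite !digit_set_digit //; case: eqP => [-> /eqP|//].
  rewrite -addn1 -[(digit q j2 p).+1]addn1 eqn_modDr.
  by rewrite !modn_small ?digit_lt // => /eqP.
rewrite /star_digit /=; case: ifP => um; first by rewrite digit_set_digit // /p um eqxx.
apply/eqP; rewrite -(eqn_modDr (digit q j p)) sum_digits_set_digit // modnDmr.
by rewrite addSnnS modnDml.
Qed.

Definition occ_sym (u s : nat) : nat :=
  if u < m then digit q s u else (s %/ q ^ m + (\sum_(l < m) digit q s l).+1) %% q.

Definition occ_row (u s : nat) : nat :=
  if u < m then set_digit q m s u ((s %/ q ^ m + (digit q s u).+1) %% q) else s %% q ^ m.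

Definition occ_col (u s : nat) : nat := u * q + occ_sym u s.

Lemma occ_sym_lt u s : occ_sym u s < q.
Proof. by rewrite /occ_sym; case: ifP; rewrite ?digit_lt ?ltn_pmod. Qed.

Lemma occ_col_div u s : occ_col u s %/ q = u.
Proof. by rewrite /occ_col divnMDl // divn_small ?occ_sym_lt ?addn0. Qed.

Lemma occ_col_mod u s : occ_col u s %% q = occ_sym u s.
Proof. by rewrite /occ_col modnMDl modn_small ?occ_sym_lt. Qed.

Lemma occ_colE k s : occ_sym (k %/ q) s = k %% q -> occ_col (k %/ q) s = k.
Proof. by rewrite /occ_col => ->; rewrite -divn_eq. Qed.

Lemma occ_row_lt u s : occ_row u s < q ^ m.
Proof.
by rewrite /occ_row; case: ifP; rewrite ?set_digit_lt ?ltn_pmod ?expn_gt0 ?q_gt0.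
Qed.

Lemma occ_col_lt u s : u <= m -> occ_col u s < q * (m + 1).
Proof. by move=> um; have := occ_sym_lt u s; rewrite /occ_col; nia. Qed.

Lemma entry_occ u s : s %/ q ^ m < q.-1 -> entry (occ_row u s) (occ_col u s) = Some s.
Proof.
move=> t_lt; have t_ltq : s %/ q ^ m < q by apply: leq_trans t_lt (leq_pred q).
rewrite /entry occ_col_div occ_col_mod /occ_sym /occ_row; case: (ltnP u m) => um.
  have d_lt := digit_lt q_gt0 s u.
  rewrite digit_set_digit ?ltn_pmod // eqxx ifN ?modnDS_neq //.
  rewrite (@modsubS_eq _ q_gt0 _ _ (s %/ q ^ m)) // (set_digitK q_gt0) ?ltn_pmod //.
  by rewrite set_digit_id -divn_eq.
have sum_modn : \sum_(l < m) digit q (s %% q ^ m) l = \sum_(l < m) digit q s l.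
  by apply: eq_bigr => l _; rewrite digit_modn.
rewrite sum_modn -modnDSmr ifN; last by rewrite eq_sym modnDS_neq ?ltn_pmod.
rewrite (@modsubS_eq _ q_gt0 _ _ (s %/ q ^ m)) ?ltn_pmod //.
by rewrite from_digits_digit modn_mod -divn_eq.
Qed.

Lemma entry_Some j k s : j < q ^ m -> entry j k = Some s ->
  [/\ s %/ q ^ m < q.-1, occ_row (k %/ q) s = j & occ_sym (k %/ q) s = k %% q].
Proof.
move=> j_lt; have qm_gt0 : 0 < q ^ m by rewrite expn_gt0 q_gt0.
have v_lt : k %% q < q by rewrite ltn_pmod.
rewrite /entry /occ_row /occ_sym; case: (ltnP (k %/ q) m) => um.
  have a_lt := digit_lt q_gt0 j (k %/ q).
  case: eqP => // /eqP av [<-].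
  have sd_lt := set_digit_lt q_gt0 m j (k %/ q) v_lt.
  rewrite divnMDl // (divn_small sd_lt) addn0 digitMDl // digit_set_digit // eqxx.
  rewrite set_digitMDl // set_digitK // modsubSK // set_digit_id (modn_small j_lt).
  by split => //; apply: (modsubS_lt_pred q_gt0).
have sm_lt : (\sum_(l < m) digit q j l) %% q < q by rewrite ltn_pmod.
case: eqP => // /eqP smv [<-]; rewrite from_digits_digit (modn_small j_lt).
set L := modsubS q _ _.
have sum_MDl : \sum_(l < m) digit q (L * q ^ m + j) l = \sum_(l < m) digit q j l.
  by apply: eq_bigr => l _; rewrite digitMDl.
rewrite divnMDl // (divn_small j_lt) addn0 modnMDl (modn_small j_lt) sum_MDl.
rewrite -modnDSmr modsubSK //.
by split => //; apply: (modsubS_lt_pred q_gt0); rewrite // eq_sym.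
Qed.

Lemma entry_occ_cross u1 u2 s : u1 <= m -> u2 <= m -> u1 != u2 ->
  entry (occ_row u1 s) (occ_col u2 s) = None.
Proof.
move=> u1m u2m u12; apply/eqP.
rewrite entry_eq_None occ_col_div occ_col_mod /star_digit /occ_sym /occ_row.
case: (ltnP u2 m) => u2m'; case: (ltnP u1 m) => u1m'.
- have u21 : (u2 == u1) = false by rewrite eq_sym (negbTE u12).
  by rewrite digit_set_digit ?ltn_pmod // u21.
- by rewrite digit_modn.
- set d := digit q s u1; set t := s %/ q ^ m.
  rewrite -(eqn_modDr d) sum_digits_set_digit ?ltn_pmod // modnDmr.
  set S := \sum_(l < m) digit q s l.
  by have -> : S + (t + d.+1) = t + S.+1 + d by lia.
- by exfalso; move/eqP: u12; lia.
Qed.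

End Array.

Section PDA.

Variables q m : nat.
Hypothesis q_gt0 : 0 < q.

Lemma nsymbols : q ^ (m + 1) - q ^ m = q.-1 * q ^ m.
Proof. by rewrite addn1 expnS -subn1 mulnBl mul1n. Qed.

Lemma ltn_nsymbols s : (s < q ^ (m + 1) - q ^ m) = (s %/ q ^ m < q.-1).
Proof. by rewrite nsymbols ltn_divLR ?expn_gt0 ?q_gt0. Qed.

Lemma block_le (k : 'I_(q * (m + 1))) : k %/ q <= m.
Proof. by rewrite -ltnS -[m.+1]addn1 ltn_divLR // [(m + 1) * q]mulnC. Qed.

Lemma Aqm_symbol_lt j k s : Aqm q m j k = Some s -> s < q ^ (m + 1) - q ^ m.
Proof. by rewrite AqmE ltn_nsymbols => /(entry_Some q_gt0 (ltn_ord j))[]. Qed.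

Lemma card_Aqm_stars (k : 'I_(q * (m + 1))) : 0 < m ->
  #|[set j | Aqm q m j k == None]| = q ^ (m - 1).
Proof.
move=> m_gt0; apply/eqP; rewrite -(eqn_pmul2l q_gt0) -expnS subn1 prednK //; apply/eqP.
rewrite -[RHS](card_star_digit q_gt0 (k %/ q) m_gt0 (ltn_pmod k q_gt0)).
by congr (_ * _); apply: eq_card => j; rewrite !inE AqmE entry_eq_None.
Qed.

Lemma card_Aqm_symbol s : s < q ^ (m + 1) - q ^ m ->
  #|[set jk : 'I_(q ^ m) * 'I_(q * (m + 1)) | Aqm q m jk.1 jk.2 == Some s]| = m + 1.
Proof.
rewrite ltn_nsymbols => t_lt.
have u_le (u : 'I_(m + 1)) : u <= m by rewrite -ltnS -[m.+1]addn1.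
pose occ (u : 'I_(m + 1)) :=
  (Ordinal (occ_row_lt m q_gt0 u s), Ordinal (occ_col_lt q_gt0 s (u_le u))).
have occ_inj : injective occ.
  move=> u1 u2 /(congr1 (fun jk => val jk.2 %/ q)).
  by rewrite /= !occ_col_div // => /ord_inj.
rewrite -[m + 1 in RHS]card_ord -(card_imset _ occ_inj); apply: eq_card => -[j k].
rewrite !inE /=; apply/eqP/imsetP => [|[u _ [-> ->]]]; last by rewrite AqmE entry_occ.
rewrite AqmE => /(entry_Some q_gt0 (ltn_ord j))[_ row sym].
have u_lt : k %/ q < m + 1 by apply: leq_ltn_trans (block_le k) _; rewrite addn1.
by exists (Ordinal u_lt) => //; congr pair; apply: val_inj; rewrite /= ?row ?occ_colE.
Qed.

Lemma Aqm_same_symbol (j1 j2 : 'I_(q ^ m)) (k1 k2 : 'I_(q * (m + 1))) s :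
  (j1, k1) != (j2, k2) -> Aqm q m j1 k1 = Some s -> Aqm q m j2 k2 = Some s ->
  [/\ j1 != j2, k1 != k2, Aqm q m j1 k2 = None & Aqm q m j2 k1 = None].
Proof.
rewrite !AqmE => ne e1 e2.
have [_ row1 /occ_colE col1] := entry_Some q_gt0 (ltn_ord j1) e1.
have [_ row2 /occ_colE col2] := entry_Some q_gt0 (ltn_ord j2) e2.
have u12 : k1 %/ q != k2 %/ q.
  apply: contra ne => /eqP u12; apply/eqP; congr pair; apply: val_inj.
    by rewrite /= -row1 -row2 u12.
  by rewrite /= -col1 -col2 u12.
have cross12 : entry q m j1 k2 = None.
  by rewrite -row1 -col2 entry_occ_cross ?block_le.
have cross21 : entry q m j2 k1 = None.
  by rewrite -row2 -col1 entry_occ_cross ?block_le // eq_sym.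
split => //.
- by apply/eqP => j12; move: cross12; rewrite j12 e2.
- by apply: contraNneq u12 => ->.
Qed.

End PDA.

Theorem theorem4 (q m : nat) :
  2 <= q -> 0 < m ->
  regular_PDA (m + 1) (q * (m + 1)) (q ^ m) (q ^ (m - 1)) (q ^ (m + 1) - q ^ m)
    (Aqm q m)
  /\ rate (q ^ (m + 1) - q ^ m) (q ^ m) = ((q - 1)%:R)%R.
Proof.
move=> q_ge2 m_gt0; have q_gt0 : 0 < q by apply: ltnW.
split; first split.
- by move=> j k s; apply: Aqm_symbol_lt.
- by move=> k; apply: card_Aqm_stars.
- by move=> s; apply: card_Aqm_symbol.
- by move=> j1 j2 k1 k2 s; apply: Aqm_same_symbol.
by rewrite /rate nsymbols natrM mulfK ?subn1 // pnatr_eq0 -lt0n expn_gt0 q_gt0.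
Qed.
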